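(* Let $\alpha,\beta\in[0,1]$ with $\alpha+\beta=1$, let $0<\delta<1/24$, and let $\xi$ be a real number with $\inf_{n\in\mathbb{N}} n\|n\xi\|\geqslant\delta$. Let $p$ be a positive integer and put $q=\left[\frac{p^2}{\delta}\log\frac{p^2}{\delta}\right]+1$. Let $$K=\Big\{x\in\mathbb{N}:\ p<x\leqslant q,\ \|x\xi\|\leqslant\frac{\delta}{(x\log(x+1))^\beta}\Big\}.$$ Then $$\sum_{x\in K}\frac{1}{(x\log(x+1))^\alpha}\leqslant 2^6\big(1+\log(1/\delta)\big).$$
   Context: $\|t\|$ denotes the distance from $t$ to the nearest integer; $[\cdot]$ is the integer part; $\log$ is the natural logarithm. *)

From Stdlib Require Import Reals Lra Lia List.
Open Scope R_scope.

(* fractional part {t} = t - floor t  (Int_part = floor) *)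
Definition frac_part (t : R) : R := t - IZR (Int_part t).

Definition dist_int (t : R) : R := Rmin (frac_part t) (1 - frac_part t).

Definition qbound (p : nat) (delta : R) : Z :=
  (Int_part (INR p ^ 2 / delta * ln (INR p ^ 2 / delta)) + 1)%Z.

(* sum over x in K of 1 / (x log(x+1))^alpha, where x ranges over the
   naturals p < x <= q, i.e. x in [p+1, q] *)
Definition K_sum (alpha beta delta xi : R) (p : nat) : R :=
  fold_right Rplus 0
    (map (fun x : nat =>
            if Rle_dec (dist_int (INR x * xi))
                       (delta / Rpower (INR x * ln (INR x + 1)) beta)
            then / Rpower (INR x * ln (INR x + 1)) alpha
            else 0)
         (seq (S p) (Z.to_nat (qbound p delta) - p))).

(* Write f(x) = log log (x + 1) and w(x) = x log (x + 1).  For x in K,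
   n ||n xi|| >= delta gives w(x)^beta <= x, and for x < y both in K,
   ||(y - x) xi|| <= 2 delta / w(x)^beta gives w(x)^beta <= 2 (y - x).  Since
   1 / w(x)^alpha = w(x)^beta / w(x), each term is at most 1 / log (x + 1) and
   at most 2 (y - x) / w(x); either way it is at most 12 (f(y) - f(x)).
   Summing over consecutive elements of K telescopes to 1 + 12 (f(q+1) - f(p+1)),
   and log (q + 2) <= 2 log (p^2/delta) <= (4 + 2 log (1/delta)) log (p + 2)
   bounds this by 37 + 24 log (1/delta). *)

From Pilot Require Import Defs.
From Stdlib Require Import Reals Lra Lia ZArith List.
Open Scope R_scope.

Lemma ln_le x y : 0 < x -> x <= y -> ln x <= ln y.
Proof.
  intros Hx Hxy; destruct (Rle_lt_or_eq_dec _ _ Hxy) as [Hlt|<-].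
  - left; now apply ln_increasing.
  - apply Rle_refl.
Qed.

Lemma ln_le_sub_1 x : 0 < x -> ln x <= x - 1.
Proof. intros Hx; pose proof (exp_ineq1_le (ln x)); rewrite exp_ln in H; lra. Qed.

Lemma ln_sub_ge_div x y : 0 < x -> x <= y -> (y - x) / y <= ln y - ln x.
Proof.
  intros Hx Hxy.
  assert (Hxy' : 0 < x / y) by (apply Rdiv_lt_0_compat; lra).
  pose proof (ln_le_sub_1 _ Hxy') as H.
  unfold Rdiv in H; rewrite ln_mult, ln_Rinv in H by (try apply Rinv_0_lt_compat; lra).
  replace ((y - x) / y) with (1 - x * / y) by (field; lra); lra.
Qed.

Lemma one_le_ln_3 : 1 <= ln 3.
Proof. rewrite <- (ln_exp 1); apply ln_le; [apply exp_pos | apply exp_le_3]. Qed.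

Lemma ln_inv_ge0 d : 0 < d <= 1 -> 0 <= ln (1 / d).
Proof.
  intros Hd; rewrite <- ln_1; apply ln_le; [lra|].
  unfold Rdiv; rewrite Rmult_1_l, <- Rinv_1; apply Rinv_le_contravar; lra.
Qed.

(* Importing Reals after Defs makes the bare name [frac_part] refer to Stdlib's. *)
Lemma frac_part_bounds t : 0 <= Defs.frac_part t < 1.
Proof. unfold Defs.frac_part; pose proof (base_Int_part t); lra. Qed.

Lemma dist_int_le_abs t k : dist_int t <= Rabs (t - IZR k).
Proof.
  unfold dist_int, Defs.frac_part; pose proof (base_Int_part t).
  destruct (Z_le_gt_dec k (Int_part t)) as [Hk|Hk].
  - apply IZR_le in Hk; eapply Rle_trans; [apply Rmin_l|]; rewrite Rabs_right; lra.
  - assert (IZR (Int_part t) + 1 <= IZR k) by (rewrite <- plus_IZR; apply IZR_le; lia).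
    eapply Rle_trans; [apply Rmin_r|]; rewrite Rabs_left1; lra.
Qed.

Lemma dist_int_attained t : exists k, dist_int t = Rabs (t - IZR k).
Proof.
  pose proof (frac_part_bounds t); unfold dist_int, Defs.frac_part in *.
  destruct (Rle_dec (t - IZR (Int_part t)) (1 - (t - IZR (Int_part t)))).
  - exists (Int_part t); rewrite Rmin_left, Rabs_right; lra.
  - exists (Int_part t + 1)%Z; rewrite Rmin_right, plus_IZR, Rabs_left1; lra.
Qed.

Lemma dist_int_sub_le a b : dist_int (a - b) <= dist_int a + dist_int b.
Proof.
  destruct (dist_int_attained a) as [k Hk], (dist_int_attained b) as [l Hl].
  eapply Rle_trans; [apply (dist_int_le_abs _ (k - l))|].
  rewrite minus_IZR, Hk, Hl.
  replace (a - b - (IZR k - IZR l)) with ((a - IZR k) + - (b - IZR l)) by ring.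
  eapply Rle_trans; [apply Rabs_triang|]; rewrite Rabs_Ropp; lra.
Qed.

Lemma inv_Rpower_conj w alpha beta : 0 < w -> alpha + beta = 1 ->
  / Rpower w alpha = Rpower w beta / w.
Proof.
  intros Hw Hab.
  assert (Hprod : Rpower w alpha * Rpower w beta = w)
    by (rewrite <- Rpower_plus, Hab, Rpower_1; auto).
  assert (0 < Rpower w alpha) by apply exp_pos.
  assert (0 < Rpower w beta) by apply exp_pos.
  set (u := Rpower w alpha) in *; set (v := Rpower w beta) in *.
  rewrite <- Hprod; field; lra.
Qed.

Lemma ln_ln_gap_near x y : 2 <= x -> x <= y -> y + 1 <= 2 * (x + 1) ->
  (y - x) / (6 * x * ln (x + 1)) <= ln (ln (y + 1)) - ln (ln (x + 1)).
Proof.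
  intros Hx Hxy Hnear.
  pose proof one_le_ln_3 as Hln3.
  set (a := ln (x + 1)); set (b := ln (y + 1)).
  assert (Ha : 1 <= a) by (eapply Rle_trans; [apply Hln3 | apply ln_le; lra]).
  assert (Hab : a <= b) by (apply ln_le; lra).
  assert (Hb2a : b <= 2 * a).
  { apply Rle_trans with (ln 2 + a).
    - unfold a, b; rewrite <- ln_mult by lra; apply ln_le; lra.
    - assert (ln 2 <= a) by (apply ln_le; lra); lra. }
  assert (Hba : (y - x) / (3 * x) <= b - a).
  { eapply Rle_trans; [|apply ln_sub_ge_div; lra].
    replace (y + 1 - (x + 1)) with (y - x) by ring.
    apply Rmult_le_compat_l; [lra|]; apply Rinv_le_contravar; lra. }
  eapply Rle_trans; [|apply ln_sub_ge_div; lra].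
  apply Rle_trans with ((y - x) / (3 * x) / (2 * a)).
  - right; field; lra.
  - unfold Rdiv at 1; apply Rle_trans with ((b - a) * / (2 * a)).
    + apply Rmult_le_compat_r; [left; apply Rinv_0_lt_compat; lra | exact Hba].
    + apply Rmult_le_compat_l; [lra|]; apply Rinv_le_contravar; lra.
Qed.

Lemma ln_ln_gap_far x y : 2 <= x -> 2 * (x + 1) <= y + 1 ->
  / (4 * ln (x + 1)) <= ln (ln (y + 1)) - ln (ln (x + 1)).
Proof.
  intros Hx Hfar.
  pose proof one_le_ln_3 as Hln3; pose proof ln_lt_2 as Hln2.
  set (a := ln (x + 1)).
  assert (Ha : 1 <= a) by (eapply Rle_trans; [apply Hln3 | apply ln_le; lra]).
  assert (ln 2 <= a) by (apply ln_le; lra).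
  assert (Hb : a + ln 2 <= ln (y + 1)).
  { unfold a; rewrite Rplus_comm, <- ln_mult by lra; apply ln_le; lra. }
  apply Rle_trans with (ln (a + ln 2) - ln a); [|apply Rplus_le_compat_r, ln_le; lra].
  eapply Rle_trans; [|apply ln_sub_ge_div; lra].
  replace (a + ln 2 - a) with (ln 2) by ring.
  assert (2 * a <= 4 * a * ln 2) by nra.
  apply (Rmult_le_reg_r (4 * a * (a + ln 2))); [nra|].
  replace (/ (4 * a) * (4 * a * (a + ln 2))) with (a + ln 2) by (field; lra).
  replace (ln 2 / (a + ln 2) * (4 * a * (a + ln 2))) with (4 * a * ln 2) by (field; lra).
  lra.
Qed.
Section Telescoping.
Variables (F g : nat -> R) (c : R) (m : nat).
Hypothesis c_ge0 : 0 <= c.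
Hypothesis g_mono : forall x y, (m <= x <= y)%nat -> g x <= g y.
Hypothesis F_le_1 : forall x, (m <= x)%nat -> F x <= 1.
Hypothesis F_le_gap : forall x y, (m <= x < y)%nat -> F x <> 0 -> F y <> 0 ->
  F x <= c * (g y - g x).

Lemma sum_seq_zero_or_anchored a n : (m <= a)%nat ->
  fold_right Rplus 0 (map F (seq a n)) = 0 \/
  exists y, (a <= y)%nat /\ F y <> 0 /\
    fold_right Rplus 0 (map F (seq a n)) <= 1 + c * (g (a + n) - g y).
Proof.
  revert a; induction n as [|n IH]; intros a Ha; [now left|].
  simpl; replace (a + S n)%nat with (S a + n)%nat by lia.
  destruct (Req_dec (F a) 0) as [Fa|Fa].
  - rewrite Fa, Rplus_0_l.
    destruct (IH (S a) ltac:(lia)) as [->|[y (Hy & Fy & Hsum)]]; [now left|].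
    right; exists y; repeat split; auto; lia.
  - right; exists a; repeat split; auto.
    destruct (IH (S a) ltac:(lia)) as [->|[y (Hy & Fy & Hsum)]].
    + pose proof (F_le_1 a Ha); pose proof (g_mono a (S a + n) ltac:(lia)); nra.
    + pose proof (F_le_gap a y ltac:(lia) Fa Fy); lra.
Qed.

Lemma sum_seq_le_telescope a n : (m <= a)%nat ->
  fold_right Rplus 0 (map F (seq a n)) <= 1 + c * (g (a + n) - g a).
Proof.
  intros Ha.
  destruct (sum_seq_zero_or_anchored a n Ha) as [->|[y (Hy & _ & Hsum)]].
  - pose proof (g_mono a (a + n) ltac:(lia)); nra.
  - pose proof (g_mono a y ltac:(lia)); nra.
Qed.

End Telescoping.

Definition xlog (x : nat) : R := INR x * ln (INR x + 1).
Definition loglog (x : nat) : R := ln (ln (INR x + 1)).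

Lemma one_le_ln_succ x : (2 <= x)%nat -> 1 <= ln (INR x + 1).
Proof.
  intros Hx; apply le_INR in Hx; simpl in Hx.
  eapply Rle_trans; [apply one_le_ln_3 | apply ln_le; lra].
Qed.

Lemma xlog_pos x : (2 <= x)%nat -> 0 < xlog x.
Proof.
  intros Hx; pose proof (one_le_ln_succ x Hx); apply le_INR in Hx; simpl in Hx.
  unfold xlog; nra.
Qed.

Lemma xlog_le x y : (2 <= x <= y)%nat -> xlog x <= xlog y.
Proof.
  intros Hxy; pose proof (one_le_ln_succ x ltac:(lia)).
  assert (2 <= INR x <= INR y) by (split; [apply (le_INR 2) | apply le_INR]; lia).
  assert (ln (INR x + 1) <= ln (INR y + 1)) by (apply ln_le; lra).
  unfold xlog; nra.
Qed.

Lemma loglog_le x y : (2 <= x <= y)%nat -> loglog x <= loglog y.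
Proof.
  intros Hxy; pose proof (one_le_ln_succ x ltac:(lia)).
  assert (0 <= INR x <= INR y) by (split; [apply pos_INR | apply le_INR; lia]).
  unfold loglog; apply ln_le; [lra|]; apply ln_le; lra.
Qed.

Section Badly_approximable.
Variables alpha beta delta xi : R.
Hypothesis alpha_beta : alpha + beta = 1.
Hypothesis beta_ge0 : 0 <= beta.
Hypothesis delta_gt0 : 0 < delta.
Hypothesis badly_approximable :
  forall n : nat, (1 <= n)%nat -> delta <= INR n * dist_int (INR n * xi).

Definition inK (x : nat) : Prop := dist_int (INR x * xi) <= delta / Rpower (xlog x) beta.

Lemma Rpower_xlog_le x : (1 <= x)%nat -> inK x -> Rpower (xlog x) beta <= INR x.
Proof.
  intros Hx Kx; pose proof (badly_approximable x Hx).
  assert (0 < Rpower (xlog x) beta) by apply exp_pos.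
  assert (0 <= INR x) by apply pos_INR.
  assert (delta <= INR x * (delta / Rpower (xlog x) beta)).
  { eapply Rle_trans; [eassumption|]; apply Rmult_le_compat_l; auto. }
  set (v := Rpower (xlog x) beta) in *.
  apply (Rmult_le_reg_r (delta / v)); [apply Rdiv_lt_0_compat; lra|].
  replace (v * (delta / v)) with delta by (field; lra); lra.
Qed.

Lemma Rpower_xlog_le_gap x y : (2 <= x < y)%nat -> inK x -> inK y ->
  Rpower (xlog x) beta <= 2 * (INR y - INR x).
Proof.
  intros Hxy Kx Ky; unfold inK in *.
  assert (Hpos : 0 < Rpower (xlog x) beta) by apply exp_pos.
  assert (Hmono : Rpower (xlog x) beta <= Rpower (xlog y) beta)
    by (apply Rle_Rpower_l; auto; split; [apply xlog_pos | apply xlog_le]; lia).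
  assert (delta / Rpower (xlog y) beta <= delta / Rpower (xlog x) beta).
  { apply Rmult_le_compat_l; [lra|]; apply Rinv_le_contravar; auto. }
  pose proof (badly_approximable (y - x) ltac:(lia)) as Hgap.
  rewrite minus_INR in Hgap by lia.
  replace ((INR y - INR x) * xi) with (INR y * xi - INR x * xi) in Hgap by ring.
  pose proof (dist_int_sub_le (INR y * xi) (INR x * xi)).
  assert (0 <= INR y - INR x) by (assert (INR x <= INR y) by (apply le_INR; lia); lra).
  set (r := delta / Rpower (xlog x) beta) in *.
  assert (delta <= (INR y - INR x) * (2 * r)).
  { eapply Rle_trans; [apply Hgap|]; apply Rmult_le_compat_l; lra. }
  apply (Rmult_le_reg_r r); [apply Rdiv_lt_0_compat; auto|].
  replace (Rpower (xlog x) beta * r) with delta by (unfold r; field; lra); lra.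
Qed.

Lemma K_term_le_inv_ln x : (2 <= x)%nat -> inK x ->
  / Rpower (xlog x) alpha <= / ln (INR x + 1).
Proof.
  intros Hx Kx; rewrite (inv_Rpower_conj _ alpha beta) by (auto; apply xlog_pos; auto).
  pose proof (Rpower_xlog_le x ltac:(lia) Kx); pose proof (one_le_ln_succ x Hx).
  assert (0 < INR x) by (apply lt_0_INR; lia).
  unfold xlog in *; apply (Rmult_le_reg_r (INR x * ln (INR x + 1))); [nra|].
  field_simplify; lra.
Qed.

Lemma K_term_le_loglog_gap x y : (2 <= x < y)%nat -> inK x -> inK y ->
  / Rpower (xlog x) alpha <= 12 * (loglog y - loglog x).
Proof.
  intros Hxy Kx Ky.
  pose proof (K_term_le_inv_ln x ltac:(lia) Kx) as Hinv.
  pose proof (Rpower_xlog_le_gap x y Hxy Kx Ky) as Hgap.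
  pose proof (one_le_ln_succ x ltac:(lia)).
  assert (2 <= INR x) by (apply (le_INR 2); lia).
  assert (INR x + 1 <= INR y) by (rewrite <- S_INR; apply le_INR; lia).
  unfold loglog; destruct (Rle_dec (INR y + 1) (2 * (INR x + 1))) as [Hnear|Hfar].
  - pose proof (ln_ln_gap_near (INR x) (INR y) ltac:(lra) ltac:(lra) Hnear).
    rewrite (inv_Rpower_conj _ alpha beta) by (auto; apply xlog_pos; lia).
    unfold xlog; set (a := ln (INR x + 1)) in *.
    apply Rle_trans with (12 * ((INR y - INR x) / (6 * INR x * a))); [|lra].
    replace (12 * ((INR y - INR x) / (6 * INR x * a)))
      with (2 * (INR y - INR x) / (INR x * a)) by (field; lra).
    apply Rmult_le_compat_r; [left; apply Rinv_0_lt_compat; nra | exact Hgap].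
  - pose proof (ln_ln_gap_far (INR x) (INR y) ltac:(lra) ltac:(lra)).
    assert (/ ln (INR x + 1) = 4 * / (4 * ln (INR x + 1))) by (field; lra).
    assert (0 < / (4 * ln (INR x + 1))) by (apply Rinv_0_lt_compat; lra).
    lra.
Qed.

Lemma K_sum_le_loglog_gap p : (0 < p)%nat ->
  K_sum alpha beta delta xi p <=
  1 + 12 * (loglog (S p + (Z.to_nat (qbound p delta) - p)) - loglog (S p)).
Proof.
  intros Hp; unfold K_sum; apply (sum_seq_le_telescope _ _ _ 2); [lra | apply loglog_le | | | lia].
  - intros x Hx; destruct Rle_dec as [Kx|]; [|lra].
    pose proof (K_term_le_inv_ln x Hx Kx); pose proof (one_le_ln_succ x Hx) as H0.
    pose proof (Rinv_le_contravar 1 _ Rlt_0_1 H0) as Hinv1; rewrite Rinv_1 in Hinv1.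
    unfold xlog in *; lra.
  - intros x y Hxy Fx Fy; do 2 destruct Rle_dec; try congruence.
    now apply K_term_le_loglog_gap.
Qed.

End Badly_approximable.

Lemma INR_to_nat_Int_part_succ_le t : 0 <= t -> INR (Z.to_nat (Int_part t + 1)) <= t + 1.
Proof.
  intros Ht; pose proof (base_Int_part t) as [Hlo Hhi].
  destruct (Z_lt_le_dec (Int_part t + 1) 0) as [Hneg|Hnonneg].
  - destruct (Int_part t + 1)%Z; simpl; try lia; lra.
  - rewrite INR_IZR_INZ, Z2Nat.id, plus_IZR by lia; lra.
Qed.

Lemma ln_qbound_succ_le p delta : 24 <= INR p ^ 2 / delta ->
  ln (INR (Z.to_nat (qbound p delta)) + 2) <= 2 * ln (INR p ^ 2 / delta).
Proof.
  intros HA; unfold qbound; set (A := INR p ^ 2 / delta) in *.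
  assert (0 <= ln A) by (rewrite <- ln_1; apply ln_le; lra).
  pose proof (ln_le_sub_1 A ltac:(lra)).
  pose proof (INR_to_nat_Int_part_succ_le (A * ln A) ltac:(nra)).
  pose proof (pos_INR (Z.to_nat (Int_part (A * ln A) + 1))).
  replace (2 * ln A) with (ln (A * A)) by (rewrite ln_mult; lra).
  apply ln_le; nra.
Qed.

Lemma loglog_qbound_gap p delta : 0 < delta < 1 / 24 -> (0 < p)%nat ->
  loglog (S (Z.to_nat (qbound p delta))) - loglog (S p) <= 3 + 2 * ln (1 / delta).
Proof.
  intros Hd Hp; set (u := ln (1 / delta)).
  assert (Hu : 0 <= u) by (apply ln_inv_ge0; lra).
  assert (Hp1 : 1 <= INR p) by (apply (le_INR 1); lia).
  assert (HA : 24 <= INR p ^ 2 / delta).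
  { assert (24 <= / delta) by (rewrite <- (Rinv_inv 24); apply Rinv_le_contravar; lra).
    unfold Rdiv; nra. }
  assert (HlnA : ln (INR p ^ 2 / delta) = 2 * ln (INR p) + u).
  { unfold u, Rdiv; rewrite ln_mult, Rmult_1_l, ln_pow
      by (try apply pow_lt; try apply Rinv_0_lt_compat; lra).
    simpl; ring. }
  pose proof (ln_qbound_succ_le p delta HA) as HlnN.
  set (c := ln (INR p + 2)).
  assert (Hc : 1 <= c) by (eapply Rle_trans; [apply one_le_ln_3 | apply ln_le; lra]).
  assert (ln (INR p) <= c) by (apply ln_le; lra).
  assert (0 < ln (INR (Z.to_nat (qbound p delta)) + 2)).
  { pose proof (pos_INR (Z.to_nat (qbound p delta))).
    apply Rlt_le_trans with (ln 2); [pose proof ln_lt_2; lra | apply ln_le; lra]. }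
  unfold loglog; rewrite !S_INR, !Rplus_assoc; replace (1 + 1) with 2 by ring; fold c.
  assert (ln (ln (INR (Z.to_nat (qbound p delta)) + 2)) <= ln (4 + 2 * u) + ln c).
  { rewrite <- ln_mult by lra; apply ln_le; nra. }
  pose proof (ln_le_sub_1 (4 + 2 * u) ltac:(lra)); lra.
Qed.

Theorem corollary3 (alpha beta delta xi : R) (p : nat) :
  0 <= alpha <= 1 -> 0 <= beta <= 1 -> alpha + beta = 1 ->
  0 < delta < 1 / 24 ->
  (forall n : nat, (1 <= n)%nat -> delta <= INR n * dist_int (INR n * xi)) ->
  (0 < p)%nat ->
  K_sum alpha beta delta xi p <= 2 ^ 6 * (1 + ln (1 / delta)).
Proof.
  intros _ Hbeta Hab Hd Hxi Hp.
  eapply Rle_trans; [apply K_sum_le_loglog_gap; auto; lra|].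
  assert (Hu : 0 <= ln (1 / delta)) by (apply ln_inv_ge0; lra).
  pose proof (loglog_qbound_gap p delta Hd Hp).
  set (N := Z.to_nat (qbound p delta)) in *.
  destruct (le_lt_dec N p) as [HNp|HpN].
  - replace (S p + (N - p))%nat with (S p) by lia; lra.
  - replace (S p + (N - p))%nat with (S N) by lia; lra.
Qed.
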